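(* For every $x>1$, $1-[R^-(x)]^2<[R^+(x)]^2-1$. Consequently, for every $c>1$ and every $\sin^{-1}(\frac1c)\le\psi_1<\psi_2\le\pi-\sin^{-1}(\frac1c)$, \[\int_{\psi_1}^{\psi_2}\frac{d\psi}{1-[R^-(c\sin\psi)]^2}>\int_{\psi_1}^{\psi_2}\frac{d\psi}{[R^+(c\sin\psi)]^2-1}.\]
   Context: Let $K(R)=\frac{\exp(\frac{R^2-1}{2})}{R}$ for $R>0$; $K$ is strictly decreasing on $(0,1]$, strictly increasing on $[1,\infty)$ with $K(1)=1$. For $s\ge1$ let $R^-(s)\in(0,1]$ and $R^+(s)\in[1,\infty)$ be the two solutions of $K(R)=s$. *)

From HB Require Import structures.
From mathcomp Require Import all_boot all_order all_algebra.
From mathcomp Require Import all_classical all_reals all_analysis.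
Set Implicit Arguments. Unset Strict Implicit. Unset Printing Implicit Defensive.
Import Order.TTheory GRing.Theory Num.Theory.
Local Open Scope classical_set_scope.
Local Open Scope ring_scope.

Definition K {R : realType} (r : R) : R := expR ((r ^+ 2 - 1) / 2) / r.

(* R^-(s): the solution in (0,1] of K(R) = s (unique for s >= 1). *)
Definition Rm {R : realType} (s : R) : R :=
  xget 1 [set r : R | 0 < r <= 1 /\ K r = s].

(* R^+(s): the solution in [1,oo) of K(R) = s (unique for s >= 1). *)
Definition Rp {R : realType} (s : R) : R :=
  xget 1 [set r : R | 1 <= r /\ K r = s].

From HB Require Import structures.
From mathcomp Require Import all_boot all_order all_algebra.
From mathcomp Require Import all_classical all_reals all_analysis.
From mathcomp Require Import ring lra measurable_realfun.
Import Order.TTheory GRing.Theory Num.Theory numFieldNormedType.Exports.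

(* Writing ln K(r) = Phi(r^2) / 2 with Phi(u) = u - 1 - ln u, the squares
   u = R^-(x)^2 < 1 < v = R^+(x)^2 satisfy Phi u = Phi v.  As Phi increases on
   [1, +oo), the inequality v - 1 > 1 - u follows from Phi (2 - u) < Phi u, that
   is from ln ((1 + w) / (1 - w)) > 2 w with w = 1 - u.
   On ]psi1, psi2[ we have c sin psi > 1, so the integrands compare pointwise;
   the strict inequality of the integrals needs the smaller one to be finite.
   With alpha = asin (1/c), c sin psi - 1 >= (psi - alpha) (pi - alpha - psi) / (2 c)
   and Phi v <= (v - 1)^2 give
   1 / (R^+(c sin psi)^2 - 1) <= c / sqrt ((psi - alpha) (pi - alpha - psi)),
   an integrable function with an arcsine primitive. *)

Set Implicit Arguments. Unset Strict Implicit. Unset Printing Implicit Defensive.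
Local Open Scope classical_set_scope.
Local Open Scope ring_scope.

Section RootsOfK.
Variable R : realType.
Implicit Types r s t u v w x y : R.

Lemma ln_lt_subr1 y : 0 < y -> y != 1 -> ln y < y - 1.
Proof.
move=> y0 y1; have := @expR_gt1Dx R (ln y); rewrite lnK ?posrE // ln_eq0 //.
by move=> /(_ y1); lra.
Qed.

Lemma ln_le_subr1 y : 0 < y -> ln y <= y - 1.
Proof. by move=> y0; have := @expR_ge1Dx R (ln y); rewrite lnK ?posrE //; lra. Qed.

Lemma ln_ge_1subV y : 0 < y -> 1 - y^-1 <= ln y.
Proof.
by move=> y0; have := @ln_le_subr1 y^-1; rewrite lnV ?posrE // invr_gt0 => /(_ y0); lra.
Qed.

Definition Phi u := u - 1 - ln u.

Lemma Phi_ge0 u : 0 < u -> 0 <= Phi u.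
Proof. by move=> /ln_le_subr1; rewrite /Phi; lra. Qed.

Lemma Phi_le_sqr v : 1 <= v -> Phi v <= (v - 1) ^+ 2.
Proof.
move=> v1; have v0 : 0 < v by lra.
have le_sqr : (v - 1) ^+ 2 / v <= (v - 1) ^+ 2.
  by rewrite ler_pdivrMr // ler_peMr // sqr_ge0.
have sqr_divE : (v - 1) ^+ 2 / v = v - 2 + v^-1 by field; rewrite gt_eqF.
by have := ln_ge_1subV v0; rewrite /Phi; lra.
Qed.

Lemma PhiB u v : 0 < u -> 0 < v -> Phi v - Phi u = v - u - ln (v / u).
Proof. by move=> u0 v0; rewrite ln_div ?posrE // /Phi; ring. Qed.

Lemma Phi_increasing : {in `[1, +oo[ &, {homo Phi : s t / s < t}}.
Proof.
move=> s t; rewrite !in_itv /= !andbT => s1 _ st.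
have [s0 t0] : 0 < s /\ 0 < t by split; lra.
have w1 : 1 < t / s by rewrite ltr_pdivlMr // mul1r.
have tE : t = t / s * s by rewrite divfK // gt_eqF.
rewrite -subr_gt0 PhiB //; have := ln_lt_subr1 (lt_trans ltr01 w1) (negbT (gt_eqF w1)).
set w := t / s in w1 tE *; nra.
Qed.

Lemma Phi_decreasing : {in `]0, 1] &, {homo Phi : s t /~ s < t}}.
Proof.
move=> s t; rewrite !in_itv /= => /andP[s0 s1] /andP[t0 _] ts.
have w1 : t / s < 1 by rewrite ltr_pdivrMr // mul1r.
have tE : t = t / s * s by rewrite divfK // gt_eqF.
rewrite -subr_gt0 PhiB //; have := ln_lt_subr1 (divr_gt0 t0 s0) (negbT (lt_eqF w1)).
set w := t / s in w1 tE *; nra.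
Qed.

Lemma K_gt0 r : 0 < r -> 0 < K r.
Proof. by move=> r0; rewrite /K divr_gt0 // expR_gt0. Qed.

Lemma ln_K r : 0 < r -> ln (K r) = Phi (r ^+ 2) / 2.
Proof.
move=> r0; rewrite /K /Phi ln_div ?posrE ?expR_gt0 // expRK lnXn //.
by rewrite mulr2n; field.
Qed.

Lemma K1 : K (1 : R) = 1.
Proof. by rewrite /K expr1n subrr mul0r expR0 divr1. Qed.

Lemma K_ge1 r : 0 < r -> 1 <= K r.
Proof.
move=> r0; rewrite -ler_ln ?posrE ?K_gt0 // ln1 ln_K //.
by rewrite divr_ge0 // Phi_ge0 // exprn_gt0.
Qed.

Lemma ltr_K s t : 0 < s -> 0 < t -> (K s < K t) = (Phi (s ^+ 2) < Phi (t ^+ 2)).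
Proof.
by move=> s0 t0; rewrite -ltr_ln ?posrE ?K_gt0 // !ln_K // ltr_pM2r.
Qed.

Lemma K_increasing : {in `[1, +oo[ &, {homo @K R : s t / s < t}}.
Proof.
move=> s t; rewrite !in_itv /= !andbT => s1 t1 st.
have [s0 t0] : 0 < s /\ 0 < t by split; lra.
rewrite ltr_K //; apply: Phi_increasing; rewrite ?in_itv /= ?andbT ?exprn_ege1 //.
by rewrite ltr_pXn2r ?nnegrE ?(ltW s0) ?(ltW t0).
Qed.

Lemma K_decreasing : {in `]0, 1] &, {homo @K R : s t /~ s < t}}.
Proof.
move=> s t; rewrite !in_itv /= => /andP[s0 s1] /andP[t0 t1] ts.
rewrite ltr_K //; apply: Phi_decreasing;
  rewrite ?in_itv /= ?exprn_gt0 ?expr_le1 ?ltr_pXn2r ?nnegrE //; lra.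
Qed.

Lemma continuous_K r : 0 < r -> {for r, continuous K}.
Proof.
move=> r0.
have -> : @K R = (fun r => expR ((r * r - 1) * 2^-1)) \* (fun r => r^-1).
  by apply/funext => z; rewrite /K /= expr2.
apply: continuousM; last by apply: continuousV; [rewrite gt_eqF|exact: cvg_id].
apply: (@continuous_comp _ _ _ (fun r => (r * r - 1) * 2^-1) expR);
  last exact: continuous_expR.
apply: continuousM; last exact: cst_continuous.
apply: continuousD; last exact: cst_continuous.
by apply: continuousM; exact: cvg_id.
Qed.

Lemma continuous_within_K a b : 0 < a -> {within `[a, b], continuous (@K R)}.
Proof.
move=> a0; apply: continuous_in_subspaceT => z.
by rewrite inE /= in_itv /= => /andP[az _]; apply: continuous_K; lra.
Qed.

(* [K r >= e^{-1/2} / r], so [K (e^{-1/2} / x) >= x >= K 1]. *)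
Lemma Rm_exists x : 1 <= x -> exists r, 0 < r <= 1 /\ K r = x.
Proof.
move=> x1; set e := expR (- 2^-1 : R).
have e0 : 0 < e by apply: expR_gt0.
have e1 : e < 1 by rewrite /e expR_lt1 oppr_lt0 invr_gt0.
set r0 := e / x.
have r00 : 0 < r0 by rewrite divr_gt0 //; lra.
have r01 : r0 <= 1 by rewrite /r0 ler_pdivrMr; lra.
have Kr0 : x <= K r0.
  rewrite /K ler_pdivlMr // /r0 mulrC divfK ?gt_eqF //; last lra.
  by rewrite /e ler_expR -/e -/r0; have := sqr_ge0 r0; lra.
have [|r] := IVT (v := x) r01 (continuous_within_K r00).
  by rewrite K1 ge_min le_max x1 Kr0 orbT.
by rewrite in_itv /= => /andP[? ?] Kr; exists r; split => //; apply/andP; split; lra.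
Qed.

(* [K (2 x) >= x >= K 1], as [expR y >= 1 + y]. *)
Lemma Rp_exists x : 1 <= x -> exists r, 1 <= r /\ K r = x.
Proof.
move=> x1.
have Kr0 : x <= K (2 * x).
  rewrite /K ler_pdivlMr; last lra.
  by apply: le_trans (expR_ge1Dx _); have := sqr_ge0 (2 * x - 1); lra.
have x2 : 1 <= 2 * x by lra.
have [|r] := IVT (v := x) x2 (continuous_within_K ltr01).
  by rewrite K1 ge_min le_max x1 Kr0 orbT.
by rewrite in_itv /= => /andP[? ?] Kr; exists r.
Qed.

Lemma RmP x : 1 <= x -> 0 < Rm x <= 1 /\ K (Rm x) = x.
Proof. by move/Rm_exists/(xgetPex 1). Qed.

Lemma RpP x : 1 <= x -> 1 <= Rp x /\ K (Rp x) = x.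
Proof. by move/Rp_exists/(xgetPex 1). Qed.

(* Below [1] the defining sets are empty and [xget] returns its default [1]. *)
Lemma Rm_lt1E x : x < 1 -> Rm x = 1.
Proof. by move=> x1; apply: xgetPN => r [/andP[r0 _] Kr]; have := K_ge1 r0; lra. Qed.

Lemma Rp_lt1E x : x < 1 -> Rp x = 1.
Proof. by move=> x1; apply: xgetPN => r [r1 Kr]; have := @K_ge1 r; lra. Qed.

Lemma Rm_gt0 x : 0 < Rm x.
Proof.
have [x1|x1] := ltP x 1; first by rewrite Rm_lt1E.
by case: (RmP x1) => /andP[].
Qed.

Lemma Rp_ge1 x : 1 <= Rp x.
Proof. by have [x1|/RpP[]//] := ltP x 1; rewrite Rp_lt1E. Qed.

Lemma Rm_lt1 x : 1 < x -> Rm x < 1.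
Proof.
move=> x1; have [/andP[_ r1] Kr] := RmP (ltW x1).
by rewrite lt_neqAle r1 andbT; apply/eqP => r1E; move: Kr; rewrite r1E K1; lra.
Qed.

Lemma Rp_gt1 x : 1 < x -> 1 < Rp x.
Proof.
move=> x1; have [r1 Kr] := RpP (ltW x1).
by rewrite lt_neqAle r1 andbT; apply/eqP => r1E; move: Kr; rewrite -r1E K1; lra.
Qed.

Lemma Rm_nonincreasing : {homo @Rm R : s t /~ s <= t}.
Proof.
move=> t s st; have [s1|s1] := ltP s 1.
  by rewrite (Rm_lt1E s1); have [/Rm_lt1E->//|/RmP[/andP[]]] := ltP t 1.
have [/andP[a0 a1] Ka] := RmP s1; have [/andP[b0 b1] Kb] := RmP (le_trans s1 st).
rewrite leNgt; apply/negP => ab.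
have := @K_decreasing (Rm t) (Rm s); rewrite !in_itv /= a0 a1 b0 b1 Ka Kb.
by move=> /(_ isT isT ab); lra.
Qed.

Lemma Rp_nondecreasing : {homo @Rp R : s t / s <= t}.
Proof.
move=> s t st; have [s1|s1] := ltP s 1; first by rewrite (Rp_lt1E s1) Rp_ge1.
have [a1 Ka] := RpP s1; have [b1 Kb] := RpP (le_trans s1 st).
rewrite leNgt; apply/negP => ba.
have := @K_increasing (Rp t) (Rp s); rewrite !in_itv /= a1 b1 Ka Kb.
by move=> /(_ isT isT ba); lra.
Qed.

Lemma is_derive_ln1D_ln1B (z : R) : -1 < z < 1 ->
  is_derive z 1 (fun z : R => ln (1 + z) - ln (1 - z) - 2 * z)
    ((1 + z)^-1 + (1 - z)^-1 - 2).
Proof.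
move=> /andP[z1 z2].
have dD : is_derive z 1 (@ln R \o (fun z => 1 + z)) ((1 + z)^-1 * 1).
  apply: is_derive1_comp; last first.
    by have := is_deriveD (is_derive_cst (1 : R) z 1) (is_derive_id z 1); rewrite add0r.
  by apply: is_derive1_ln; lra.
have dB : is_derive z 1 (@ln R \o (fun z => 1 - z)) ((1 - z)^-1 * -1).
  apply: is_derive1_comp; last first.
    by have := is_deriveB (is_derive_cst (1 : R) z 1) (is_derive_id z 1); rewrite sub0r.
  by apply: is_derive1_ln; lra.
have d2 : is_derive z 1 (fun z : R => 2 * z) 2.
  by rewrite -[X in is_derive _ _ _ X]mulr1; exact: is_deriveZ.
by have := is_deriveB (is_deriveB dD dB) d2; rewrite !mulrN1 mulr1 opprK.
Qed.

Lemma ln1D_sub_ln1B_gt w : 0 < w < 1 -> 2 * w < ln (1 + w) - ln (1 - w).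
Proof.
move=> /andP[w0 w1].
pose h (z : R) := ln (1 + z) - ln (1 - z) - 2 * z.
have h'E z : z \in `]0, w[ -> is_derive z 1 h ((1 + z)^-1 + (1 - z)^-1 - 2).
  by rewrite in_itv /= => /andP[? ?]; apply: is_derive_ln1D_ln1B; apply/andP; split; lra.
have ch : {within `[0, w], continuous h}.
  apply: derivable_within_continuous => z; rewrite in_itv /= => /andP[? ?].
  by apply: ex_derive; apply: is_derive_ln1D_ln1B; apply/andP; split; lra.
have [z] := MVT w0 h'E ch; rewrite in_itv /= => /andP[z0 zw].
rewrite /h !addr0 subr0 ln1 mulr0 !subr0.
have -> : (1 + z)^-1 + (1 - z)^-1 - 2 = 2 * z ^+ 2 / ((1 + z) * (1 - z)).
  by field; apply/andP; split; apply/eqP; lra.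
have : 0 < 2 * z ^+ 2 / ((1 + z) * (1 - z)) * w.
  by rewrite !mulr_gt0 ?exprn_gt0 ?invr_gt0 ?mulr_gt0 //; lra.
lra.
Qed.

Lemma Phi_2B_lt u : 0 < u < 1 -> Phi (2 - u) < Phi u.
Proof.
move=> /andP[u0 u1]; have /ln1D_sub_ln1B_gt : 0 < 1 - u < 1 by apply/andP; split; lra.
have -> : 1 + (1 - u) = 2 - u by ring.
have -> : 1 - (1 - u) = u by ring.
rewrite /Phi; lra.
Qed.

Lemma Phi_eq_gap u v : 0 < u < 1 -> 1 <= v -> Phi v = Phi u -> 1 - u < v - 1.
Proof.
move=> /andP[u0 u1] v1 PhiE; rewrite ltNge; apply/negP => v_le.
have : Phi v <= Phi (2 - u).
  by apply: (ltW_homo_in Phi_increasing); rewrite ?in_itv /= ?andbT; lra.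
by have := @Phi_2B_lt u; rewrite u0 u1 => /(_ isT); lra.
Qed.

Lemma Rm_Rp_gap x : 1 < x -> 1 - Rm x ^+ 2 < Rp x ^+ 2 - 1.
Proof.
move=> x1; have [/andP[a0 _] Ka] := RmP (ltW x1); have [b1 Kb] := RpP (ltW x1).
have a1 := Rm_lt1 x1; have b0 : 0 < Rp x by lra.
apply: Phi_eq_gap; first by rewrite exprn_gt0 //= expr_lt1 //; lra.
  exact: exprn_ege1.
by have := ln_K a0; have := ln_K b0; rewrite Ka Kb; lra.
Qed.

Lemma Rp_sqrB1_ge x : 1 < x -> 2 * (x - 1) <= x * (Rp x ^+ 2 - 1) ^+ 2.
Proof.
move=> x1; have [b1 Kb] := RpP (ltW x1).
have b0 : 0 < Rp x by lra.
have PhiE : Phi (Rp x ^+ 2) = 2 * ln x by have := ln_K b0; rewrite Kb; lra.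
have Phi_le := @Phi_le_sqr (Rp x ^+ 2) (exprn_ege1 2 b1).
have x_ln : x - 1 <= x * ln x.
  have := ln_ge_1subV (lt_trans ltr01 x1).
  by rewrite -(ler_pM2l (lt_trans ltr01 x1)) mulrBr mulr1 divff ?gt_eqF //; lra.
by rewrite PhiE in Phi_le; nra.
Qed.

Lemma onem_Rm_sqr_gt0 x : 1 < x -> 0 < 1 - Rm x ^+ 2.
Proof. by move=> /Rm_lt1 ?; rewrite subr_gt0 expr_lt1 ?(ltW (Rm_gt0 x)). Qed.

Lemma Rp_sqrB1_gt0 x : 1 < x -> 0 < Rp x ^+ 2 - 1.
Proof. by move=> /Rp_gt1 ?; rewrite subr_gt0 expr_gt1 // (le_trans ler01 (Rp_ge1 x)). Qed.

Lemma onem_Rm_sqr_nondecreasing : {homo (fun s => 1 - Rm s ^+ 2) : s t / s <= t}.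
Proof.
move=> s t st; rewrite lerD2l lerN2 ler_pXn2r ?nnegrE ?(ltW (Rm_gt0 _)) //.
exact: Rm_nonincreasing.
Qed.

Lemma Rp_sqrB1_nondecreasing : {homo (fun s => Rp s ^+ 2 - 1) : s t / s <= t}.
Proof.
move=> s t st; rewrite lerD2r ler_pXn2r ?nnegrE ?(le_trans ler01 (Rp_ge1 _)) //.
exact: Rp_nondecreasing.
Qed.

End RootsOfK.

Lemma sin_ge_mul_cos (R : realType) (t T : R) :
  0 <= t <= T -> T <= pi / 2 -> t * cos T <= sin t.
Proof.
move=> /andP[]; rewrite le_eqVlt => /predU1P[<- _ _|t0 tT Tpi]; first by rewrite mul0r sin0.
have [z] := MVT t0 (fun z _ => is_derive_sin z)
  (continuous_subspaceT (@continuous_sin R)).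
rewrite in_itv /= sin0 !subr0 => /andP[z0 zt] ->; rewrite mulrC ler_pM2r //.
by rewrite leNgt ltr_cos ?in_itv /= -?leNgt; do ?[apply/andP; split]; lra.
Qed.

Section IntegralFacts.
Variable R : realType.
Notation mu := (@lebesgue_measure R).

Lemma measurable_funV_gt0 (D : set R) (h : R -> R) : measurable D ->
  measurable_fun D h -> (forall x, D x -> 0 < h x) ->
  measurable_fun D (fun x => (h x)^-1).
Proof.
move=> mD mh h_gt0.
have posE : [set x : R | 0 < x] = `]0, +oo[%classic.
  by apply/seteqP; split => x /=; rewrite in_itv /= andbT.
apply: (measurable_comp (F := [set x : R | 0 < x])) => //.
- by rewrite posE; exact: measurable_itv.
- by move=> _ [x Dx <-]; exact: h_gt0.
apply: open_continuous_measurable_fun; first by rewrite posE; exact: interval_open.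
by move=> x; rewrite inE /= => x0; apply: continuousV; [rewrite gt_eqF | exact: cvg_id].
Qed.

Lemma bigcup_itvcc_shrink (a b : R) : a < b ->
  \bigcup_n `[a + (b - a) / n.+3%:R, b - (b - a) / n.+3%:R]%classic = `]a, b[%classic.
Proof.
move=> ab; apply/seteqP; split => z.
  case=> n _ /=; rewrite !in_itv /=.
  have : 0 < (b - a) / n.+3%:R by rewrite divr_gt0 ?subr_gt0.
  set e := _ / _ => e0 /andP[az zb].
  by apply/andP; split; lra.
rewrite /= in_itv /= => /andP[az zb].
pose m := Num.min (z - a) (b - z).
have m0 : 0 < m by rewrite lt_min !subr_gt0 az zb.
pose n := Num.trunc ((b - a) / m).
have n_gt : (b - a) / m < n.+3%:R.
  by apply: (lt_le_trans (truncnS_gt _)); rewrite ler_nat ltnW.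
have e_lt : (b - a) / n.+3%:R < m by rewrite ltr_pdivrMr // mulrC -ltr_pdivrMr.
exists n => //=; rewrite in_itv /=; set e := _ / _ in e_lt *.
have : m <= z - a by rewrite ge_min lexx.
have : m <= b - z by rewrite ge_min lexx orbT.
by move=> ? ?; apply/andP; split; lra.
Qed.

Lemma ge0_integral_itvoo_le (a b M : R) (h : R -> R) : a < b ->
  measurable_fun `]a, b[ h -> (forall x, a < x < b -> 0 <= h x) ->
  (forall x y, a < x -> x < y -> y < b ->
     (\int[mu]_(z in `[x, y]) (h z)%:E <= M%:E)%E) ->
  (\int[mu]_(z in `]a, b[) (h z)%:E <= M%:E)%E.
Proof.
move=> ab mh h0 h_le.
pose e (n : nat) := (b - a) / n.+3%:R.
pose F n := `[a + e n, b - e n]%classic.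
have e_gt0 n : 0 < e n by rewrite divr_gt0 ?subr_gt0.
have e_le n : e n * 3 <= b - a.
  by rewrite /e mulrAC ler_pdivrMr // ler_pM2l ?subr_gt0 // ler_nat.
have FD n : F n `<=` `]a, b[%classic by rewrite -bigcup_itvcc_shrink //; exact: bigcup_sup.
have F_nd : nondecreasing_seq F.
  move=> n m nm; rewrite /F; apply/subsetPset => z /=; rewrite !in_itv /=.
  have : e m <= e n by rewrite ler_pM2l ?subr_gt0 // lef_pV2 ?posrE ?ler_nat.
  by move=> emn /andP[? ?]; apply/andP; split; lra.
have mF n : measurable_fun (F n) (EFin \o h).
  by apply/measurable_EFinP; exact: measurable_funS (measurable_itv _) (FD n) mh.
have h0F n x : F n x -> (0 <= (EFin \o h) x)%E.
  by move=> /FD /=; rewrite in_itv lee_fin => /h0.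
have cvgF := ge0_nondecreasing_set_cvg_integral F_nd (fun=> measurable_itv _) mF h0F
  (mu := mu).
rewrite -bigcup_itvcc_shrink // -(cvg_lim _ cvgF) //.
apply: lime_le; first by apply/cvg_ex; eexists; exact: cvgF.
by apply: nearW => n; apply: h_le; have := e_gt0 n; have := e_le n; lra.
Qed.

Lemma integral_gt0 d (T : measurableType d) (nu : {measure set T -> \bar R})
    (D : set T) (h : T -> R) :
  measurable D -> measurable_fun D h -> (forall x, D x -> 0 < h x) ->
  (0 < nu D)%E -> (0 < \int[nu]_(x in D) (h x)%:E)%E.
Proof.
move=> mD mh h_gt0 nuD; rewrite lt_neqAle integral_ge0 ?andbT; last first.
  by move=> x Dx; rewrite lee_fin ltW // h_gt0.
apply/eqP => /esym int0.
have [N [mN N0 DN]] : ae_eq nu D (EFin \o h) (cst 0%E).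
  apply/ae_eq_integral_abs => //; first exact/measurable_EFinP.
  rewrite -int0; apply: eq_integral => x /set_mem Dx.
  by rewrite gee0_abs // lee_fin ltW // h_gt0.
have : (nu D <= nu N)%E.
  apply: le_measure; rewrite ?inE //.
  by move=> x Dx; apply: DN => /(_ Dx) /= [] /eqP; rewrite gt_eqF // h_gt0.
by rewrite N0 leNgt nuD.
Qed.

Lemma fin_num_integral_lt d (T : measurableType d) (nu : {measure set T -> \bar R})
    (D : set T) (f g : T -> R) :
  measurable D -> measurable_fun D f -> measurable_fun D g ->
  (forall x, D x -> 0 <= g x) -> (forall x, D x -> g x < f x) -> (0 < nu D)%E ->
  (\int[nu]_(x in D) (g x)%:E)%E \is a fin_num ->
  (\int[nu]_(x in D) (g x)%:E < \int[nu]_(x in D) (f x)%:E)%E.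
Proof.
move=> mD mf mg g0 gf nuD g_fin.
have mfg : measurable_fun D (f \- g) by exact: measurable_funB.
have -> : (\int[nu]_(x in D) (f x)%:E =
    \int[nu]_(x in D) (g x)%:E + \int[nu]_(x in D) ((f \- g) x)%:E)%E.
  rewrite -ge0_integralD //; last 3 first.
  - exact/measurable_EFinP.
  - by move=> x Dx; rewrite lee_fin subr_ge0 ltW ?gf.
  - exact/measurable_EFinP.
  by congr (integral _ _ _); apply/funext => x; rewrite -EFinD /= addrC subrK.
by rewrite lteDl //; apply: integral_gt0 => // x Dx; rewrite subr_gt0 gf.
Qed.

Lemma measurable_fun_nondecreasing_comp (D : set R) (H g : R -> R) : measurable D ->
  {homo H : s t / s <= t} -> continuous g -> measurable_fun D (H \o g).
Proof.
move=> mD H_nd cg; apply: measurableT_comp; first exact: nondecreasing_measurable.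
exact: measurable_funS measurableT (subsetT _) (continuous_measurable_fun cg).
Qed.

End IntegralFacts.

Section SineArc.
Variables (R : realType) (c : R).
Hypothesis c1 : 1 < c.

Definition alpha := asin c^-1.

Definition quad (p : R) := (p - alpha) * (pi - alpha - p).

Let c0 : 0 < c. Proof. exact: lt_trans ltr01 c1. Qed.

Lemma sin_alpha : sin alpha = c^-1.
Proof.
have ci : 0 < c^-1 < 1 by rewrite invr_gt0 c0 invf_lt1.
by rewrite asinK // in_itv /=; lra.
Qed.

Lemma alpha_itv : 0 < alpha < pi / 2.
Proof.
have ci : 0 < c^-1 < 1 by rewrite invr_gt0 c0 invf_lt1.
have ci' : -1 <= c^-1 <= 1 by lra.
have pi0 := @pi_gt0 R; have := asin_geNpi2 ci'; have := asin_lepi2 ci'.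
rewrite -/alpha => a_le a_ge; rewrite /alpha asin_ltpi2 ?andbT; last lra.
rewrite -(@ltr_sin R) ?sin0 -/alpha ?sin_alpha ?invr_gt0 // in_itv /=.
all: by apply/andP; split; lra.
Qed.

Lemma cos_pi2B_alpha : cos (pi / 2 - alpha) = c^-1.
Proof. by rewrite cosB cos_pihalf sin_pihalf mul0r add0r mul1r sin_alpha. Qed.

(* [cos (A - B) - cos (A + B) = 2 sin A sin B]
   with [A - B = p - pi/2] and [A + B = pi/2 - alpha] *)
Lemma c_sinB1E p :
  c * sin p - 1 = 2 * c * sin ((p - alpha) / 2) * sin ((pi - alpha - p) / 2).
Proof.
set A := (p - alpha) / 2; set B := (pi - alpha - p) / 2.
have /(congr1 cos) : A - B = p - pi / 2 by rewrite /A /B; field.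
have /(congr1 cos) : A + B = pi / 2 - alpha by rewrite /A /B; field.
rewrite cosBpihalf cos_pi2B_alpha cosB cosD => cApB cAmB.
have -> : c * sin p - 1 = c * (sin p - c^-1) by field; rewrite gt_eqF.
by rewrite -cAmB -cApB; ring.
Qed.

Lemma quad_gt0 p : alpha < p < pi - alpha -> 0 < quad p.
Proof. by move=> /andP[? ?]; rewrite /quad mulr_gt0 //; lra. Qed.

(* Each sine factor of [c_sinB1E] is at least its argument times
   [cos (pi/2 - alpha) = 1/c], by [sin_ge_mul_cos]. *)
Lemma c_sinB1_ge p : alpha < p < pi - alpha -> quad p / (2 * c) <= c * sin p - 1.
Proof.
move=> /andP[p1 p2]; have /andP[a0 a1] := alpha_itv.
have sin_ge t : 0 <= t <= pi / 2 - alpha -> 0 <= t / c <= sin t.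
  move=> /andP[t0 tT]; rewrite divr_ge0 ?(ltW c0) //= -cos_pi2B_alpha.
  by rewrite sin_ge_mul_cos ?t0 ?tT //; lra.
have /andP[A0 sA] : 0 <= (p - alpha) / 2 / c <= sin ((p - alpha) / 2).
  by apply: sin_ge; apply/andP; split; lra.
have /andP[B0 sB] : 0 <= (pi - alpha - p) / 2 / c <= sin ((pi - alpha - p) / 2).
  by apply: sin_ge; apply/andP; split; lra.
rewrite c_sinB1E (_ : quad p / (2 * c) =
  2 * c * ((p - alpha) / 2 / c * ((pi - alpha - p) / 2 / c))); last first.
  by rewrite /quad; field; rewrite gt_eqF.
by rewrite -[2 * c * _ * _]mulrA ler_pM2l ?mulr_gt0 ?ltr0n // ler_pM.
Qed.

Lemma c_sin_gt1 p : alpha < p < pi - alpha -> 1 < c * sin p.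
Proof.
move=> p_itv; have := c_sinB1_ge p_itv.
have : 0 < quad p / (2 * c) by rewrite divr_gt0 ?quad_gt0 ?mulr_gt0 ?ltr0n.
lra.
Qed.

Lemma invRp_le p : alpha < p < pi - alpha ->
  (Rp (c * sin p) ^+ 2 - 1)^-1 <= c / Num.sqrt (quad p).
Proof.
move=> p_itv; have q0 := quad_gt0 p_itv; have := c_sinB1_ge p_itv.
set x := c * sin p => q_le.
have x1 : 1 < x by exact: c_sin_gt1.
have xc : x <= c by rewrite /x ler_piMr ?sin_le1 ?ltW.
have := Rp_sqrB1_ge x1; have := Rp_gt1 x1.
set b := Rp x => b1 xw; set w := b ^+ 2 - 1 in xw *.
have w0 : 0 < w by rewrite subr_gt0 expr_gt1 //; lra.
have xw' : x * w ^+ 2 <= c * w ^+ 2 by rewrite ler_wpM2r ?sqr_ge0.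
have q_le' : quad p <= 2 * c * (x - 1) by rewrite mulrC -ler_pdivrMr ?mulr_gt0 ?ltr0n.
have q_sqr : quad p <= (c * w) ^+ 2.
  apply: (le_trans q_le'); rewrite (mulrC 2) -mulrA exprMn expr2 -mulrA ler_pM2l //.
  lra.
have sq_le : Num.sqrt (quad p) <= c * w.
  by rewrite -(ger0_norm (ltW (mulr_gt0 c0 w0))) -sqrtr_sqr ler_wsqrtr.
rewrite ler_pdivlMr ?sqrtr_gt0 // mulrC ler_pdivrMr //.
Qed.

Definition kappa := 2 / (pi - 2 * alpha).

Definition arc_primitive p := c * asin (kappa * (p - pi / 2)).

Lemma kappa_gt0 : 0 < kappa.
Proof. by have /andP[_ a1] := alpha_itv; rewrite /kappa divr_gt0 //; lra. Qed.

Lemma kappa_itv p : alpha < p < pi - alpha -> -1 < kappa * (p - pi / 2) < 1.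
Proof.
move=> /andP[p1 p2]; have /andP[a0 a1] := alpha_itv; have k0 := kappa_gt0.
have k2 : kappa * (pi - 2 * alpha) = 2 by rewrite /kappa divfK // gt_eqF //; lra.
by apply/andP; split; nra.
Qed.

Lemma onem_sqr_kappa p : 1 - (kappa * (p - pi / 2)) ^+ 2 = kappa ^+ 2 * quad p.
Proof.
have /andP[_ a1] := alpha_itv.
by rewrite /kappa /quad; field; rewrite gt_eqF //; lra.
Qed.

Lemma is_derive_arc_primitive p : alpha < p < pi - alpha ->
  is_derive p 1 arc_primitive (c / Num.sqrt (quad p)).
Proof.
move=> p_itv; have q0 := quad_gt0 p_itv; have k0 := kappa_gt0.
pose u p := kappa * (p - pi / 2).
have du : is_derive p 1 u kappa.
  have := is_deriveZ kappa (is_deriveB (is_derive_id p 1) (is_derive_cst (pi / 2) p 1)).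
  by rewrite subr0 /GRing.scale /= mulr1.
have := is_deriveZ c
  (is_derive1_comp (f := asin) (g := u) (is_derive1_asin (kappa_itv p_itv)) du).
rewrite /GRing.scale /= onem_sqr_kappa sqrtrM ?sqr_ge0 // sqrtr_sqr ger0_norm ?ltW //.
have s0 : 0 < Num.sqrt (quad p) by rewrite sqrtr_gt0.
rewrite (_ : _ * kappa = (Num.sqrt (quad p))^-1); last by field; rewrite !gt_eqF.
exact.
Qed.

Lemma continuous_invsqrt_quad p : alpha < p < pi - alpha ->
  {for p, continuous (fun p => c / Num.sqrt (quad p))}.
Proof.
move=> /quad_gt0 q0; apply: continuousM; first exact: cst_continuous.
apply: continuousV; first by rewrite gt_eqF // sqrtr_gt0.
apply: (@continuous_comp _ _ _ quad (@Num.sqrt R)); last exact: sqrt_continuous.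
by apply: continuousM; apply: continuousB;
  do ?[exact: cvg_id | exact: cst_continuous].
Qed.

Lemma arc_primitiveB_le p1 p2 : alpha < p1 < pi - alpha -> alpha < p2 < pi - alpha ->
  arc_primitive p2 - arc_primitive p1 <= c * pi.
Proof.
move=> /kappa_itv/andP[u1 u1'] /kappa_itv/andP[u2 u2'].
have /asin_geNpi2 : -1 <= kappa * (p1 - pi / 2) <= 1 by apply/andP; split; lra.
have /asin_lepi2 : -1 <= kappa * (p2 - pi / 2) <= 1 by apply/andP; split; lra.
rewrite /arc_primitive -mulrBr ler_pM2l //; lra.
Qed.

Lemma integral_invsqrt_quad x y : alpha < x -> x < y -> y < pi - alpha ->
  (\int[lebesgue_measure]_(p in `[x, y]) (c / Num.sqrt (quad p))%:E =
   (arc_primitive y - arc_primitive x)%:E)%E.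
Proof.
move=> ax xy yb.
have xy_sub z : x <= z -> z <= y -> alpha < z < pi - alpha.
  by move=> ? ?; apply/andP; split; lra.
have cF z : x <= z <= y -> {for z, continuous arc_primitive}.
  move=> /andP[xz zy]; apply/differentiable_continuous/derivable1_diffP.
  exact/ex_derive/is_derive_arc_primitive/xy_sub.
rewrite EFinB; apply: continuous_FTC2 => //.
- apply: continuous_in_subspaceT => z; rewrite inE /= in_itv /= => /andP[? ?].
  exact/continuous_invsqrt_quad/xy_sub.
- split.
  + move=> z; rewrite in_itv /= => /andP[? ?].
    by apply/ex_derive/is_derive_arc_primitive/xy_sub; apply: ltW.
  + by apply: cvg_at_right_filter; apply: cF; rewrite lexx ltW.
  + by apply: cvg_at_left_filter; apply: cF; rewrite lexx ltW.
- move=> z; rewrite in_itv /= => /andP[xz zy].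
  have := is_derive_arc_primitive (xy_sub z (ltW xz) (ltW zy)).
  by move=> dF; rewrite derive1E derive_val.
Qed.

Lemma measurable_invRm (D : set R) : measurable D ->
  (forall p, D p -> 1 < c * sin p) ->
  measurable_fun D (fun p => (1 - Rm (c * sin p) ^+ 2)^-1).
Proof.
move=> mD x1; apply: measurable_funV_gt0 => // [|p /x1/onem_Rm_sqr_gt0//].
apply: (measurable_fun_nondecreasing_comp (H := fun s => 1 - Rm s ^+ 2)) => //.
  exact: onem_Rm_sqr_nondecreasing.
by move=> p; apply: continuousM; [exact: cst_continuous | exact: continuous_sin].
Qed.

Lemma measurable_invRp (D : set R) : measurable D ->
  (forall p, D p -> 1 < c * sin p) ->
  measurable_fun D (fun p => (Rp (c * sin p) ^+ 2 - 1)^-1).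
Proof.
move=> mD x1; apply: measurable_funV_gt0 => // [|p /x1/Rp_sqrB1_gt0//].
apply: (measurable_fun_nondecreasing_comp (H := fun s => Rp s ^+ 2 - 1)) => //.
  exact: Rp_sqrB1_nondecreasing.
by move=> p; apply: continuousM; [exact: cst_continuous | exact: continuous_sin].
Qed.

Lemma integral_invRp_le psi1 psi2 :
  alpha <= psi1 -> psi1 < psi2 -> psi2 <= pi - alpha ->
  (\int[lebesgue_measure]_(p in `]psi1, psi2[) ((Rp (c * sin p) ^+ 2 - 1)^-1)%:E
     <= (c * pi)%:E)%E.
Proof.
move=> a1 psi12 a2.
have itvP p : psi1 < p < psi2 -> alpha < p < pi - alpha.
  by move=> /andP[? ?]; apply/andP; split; lra.
apply: ge0_integral_itvoo_le => //.
- apply: measurable_invRp; first exact: measurable_itv.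
  by move=> p; rewrite /= in_itv /= => /itvP/c_sin_gt1.
- by move=> p /itvP/c_sin_gt1/Rp_sqrB1_gt0 ?; rewrite invr_ge0 ltW.
move=> x y x1 xy y2.
have sub z : `[x, y]%classic z -> alpha < z < pi - alpha.
  by rewrite /= in_itv /= => /andP[? ?]; apply/andP; split; lra.
apply: (le_trans
  (y := \int[lebesgue_measure]_(z in `[x, y]) (c / Num.sqrt (quad z))%:E)%E).
  apply: ge0_le_integral => //.
  - by move=> z /sub/c_sin_gt1/Rp_sqrB1_gt0 ?; rewrite lee_fin invr_ge0 ltW.
  - apply/measurable_EFinP; apply: measurable_invRp; first exact: measurable_itv.
    by move=> z /sub/c_sin_gt1.
  - apply/measurable_EFinP; apply: subspace_continuous_measurable_fun.
      exact: measurable_itv.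
    apply: continuous_in_subspaceT => z /set_mem/sub.
    exact: continuous_invsqrt_quad.
  - by move=> z /sub/invRp_le; rewrite lee_fin.
have [ax yb] : alpha < x /\ y < pi - alpha by split; lra.
by rewrite integral_invsqrt_quad // lee_fin arc_primitiveB_le //; apply/andP; split; lra.
Qed.

Lemma integral_invRp_lt_invRm psi1 psi2 :
  alpha <= psi1 -> psi1 < psi2 -> psi2 <= pi - alpha ->
  (\int[lebesgue_measure]_(p in `[psi1, psi2]) ((Rp (c * sin p) ^+ 2 - 1)^-1)%:E <
   \int[lebesgue_measure]_(p in `[psi1, psi2]) ((1 - Rm (c * sin p) ^+ 2)^-1)%:E)%E.
Proof.
move=> a1 psi12 a2; pose D := `]psi1, psi2[%classic.
have mD : measurable D by exact: measurable_itv.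
have x1 p : D p -> 1 < c * sin p.
  by rewrite /D /= in_itv /= => /andP[? ?]; apply: c_sin_gt1; apply/andP; split; lra.
have mRm := measurable_invRm mD x1; have mRp := measurable_invRp mD x1.
rewrite !(integral_itv_bndoo true false); try exact/measurable_EFinP.
have Rp0 p : D p -> 0 <= (Rp (c * sin p) ^+ 2 - 1)^-1.
  by move=> /x1/Rp_sqrB1_gt0 ?; rewrite invr_ge0 ltW.
apply: fin_num_integral_lt => //.
- move=> p /x1 x1p; rewrite ltf_pV2 ?posrE ?onem_Rm_sqr_gt0 ?Rp_sqrB1_gt0 //.
  exact: Rm_Rp_gap.
- have := lebesgue_measure_itv `]psi1, psi2[; rewrite /= lte_fin psi12 -EFinD => ->.
  by rewrite lte_fin subr_gt0.
rewrite ge0_fin_numE; last by apply: integral_ge0 => p /Rp0; rewrite lee_fin.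
exact: le_lt_trans (integral_invRp_le a1 psi12 a2) (ltry _).
Qed.

End SineArc.

Theorem mainTheorem7 (R : realType) :
  (forall x : R, 1 < x -> 1 - (Rm x) ^+ 2 < (Rp x) ^+ 2 - 1) /\
  (forall c psi1 psi2 : R, 1 < c ->
     asin (c^-1) <= psi1 -> psi1 < psi2 -> psi2 <= pi - asin (c^-1) ->
     (\int[lebesgue_measure]_(psi in `[psi1, psi2])
        ((1 - (Rm (c * sin psi)) ^+ 2)^-1)%:E >
      \int[lebesgue_measure]_(psi in `[psi1, psi2])
        (((Rp (c * sin psi)) ^+ 2 - 1)^-1)%:E)%E).
Proof.
split; first exact: Rm_Rp_gap.
by move=> c psi1 psi2 c1; exact: integral_invRp_lt_invRm.
Qed.
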